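(* Let $(X,f)$ be a dynamical system and let $x$ be a minimal point. Then for every $y$ with $(x,y)\in\mathrm{SProx}(f)$, the orbit closure $\overline{\{f^n(x):n\ge0\}}$ is the unique minimal set contained in $\overline{\{f^n(y):n\ge0\}}$. In particular, if $f(x)=x$, then (i) $x$ is the only minimal point in $\overline{\{f^n(y):n\ge0\}}$ for every $y\in\mathrm{SProx}(f)(x)$, and (ii) $\mathrm{SProx}(f)(x)=\bigcup_{y\in\mathrm{SProx}(f)(x)}\overline{\{f^n(y):n\ge0\}}$.
   Context: Dynamical system: compact metric space $X$ with metric $d$ and continuous $f$. A minimal set is a nonempty closed $f$-invariant set with no proper nonempty closed invariant subset; a minimal point is a point of some minimal set. $\mathrm{SProx}(f)=\{(x,y):\{n\in\mathbb N:d(f^nx,f^ny)<\varepsilon\}$ syndetic for every $\varepsilon>0\}$, where syndetic means meeting every subset of $\mathbb N$ with arbitrarily long runs of consecutive integers; $\mathrm{SProx}(f)(x)=\{y:(x,y)\in\mathrm{SProx}(f)\}$. *)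

From Stdlib Require Import Reals List.
Open Scope R_scope.

Definition is_metric {X : Type} (d : X -> X -> R) : Prop :=
  (forall x y, d x y = 0 <-> x = y) /\
  (forall x y, d x y = d y x) /\
  (forall x y z, d x z <= d x y + d y z).

Definition is_open {X : Type} (d : X -> X -> R) (U : X -> Prop) : Prop :=
  forall x, U x -> exists r, r > 0 /\ forall y, d x y < r -> U y.

Definition compact_space {X : Type} (d : X -> X -> R) : Prop :=
  forall (I : Type) (U : I -> X -> Prop),
    (forall i, is_open d (U i)) ->
    (forall x, exists i, U i x) ->
    exists l : list I, forall x, exists i, In i l /\ U i x.

Definition continuous_map {X : Type} (d : X -> X -> R) (f : X -> X) : Prop :=
  forall x eps, eps > 0 ->
    exists delta, delta > 0 /\ forall y, d x y < delta -> d (f x) (f y) < eps.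

Definition iterate {X : Type} (f : X -> X) (n : nat) (x : X) : X := Nat.iter n f x.

Definition closure {X : Type} (d : X -> X -> R) (A : X -> Prop) : X -> Prop :=
  fun z => forall eps, eps > 0 -> exists a, A a /\ d z a < eps.

Definition is_closed {X : Type} (d : X -> X -> R) (A : X -> Prop) : Prop :=
  forall z, closure d A z -> A z.

Definition invariant {X : Type} (f : X -> X) (A : X -> Prop) : Prop :=
  forall z, A z -> A (f z).

Definition subset {X : Type} (A B : X -> Prop) : Prop := forall z, A z -> B z.

Definition set_eq {X : Type} (A B : X -> Prop) : Prop := forall z, A z <-> B z.

Definition minimal_set {X : Type} (d : X -> X -> R) (f : X -> X) (M : X -> Prop) : Prop :=
  (exists z, M z) /\ is_closed d M /\ invariant f M /\
  forall N : X -> Prop, (exists z, N z) -> is_closed d N -> invariant f N ->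
    subset N M -> set_eq N M.

Definition minimal_point {X : Type} (d : X -> X -> R) (f : X -> X) (x : X) : Prop :=
  exists M, minimal_set d f M /\ M x.

Definition orbit_closure {X : Type} (d : X -> X -> R) (f : X -> X) (x : X) : X -> Prop :=
  closure d (fun z => exists n : nat, z = iterate f n x).

Definition thick (T : nat -> Prop) : Prop :=
  forall L : nat, exists n : nat, forall i : nat, (i < L)%nat -> T (n + i)%nat.

Definition syndetic (S : nat -> Prop) : Prop :=
  forall T, thick T -> exists n, S n /\ T n.

Definition SProx {X : Type} (d : X -> X -> R) (f : X -> X) (x y : X) : Prop :=
  forall eps, eps > 0 ->
    syndetic (fun n => d (iterate f n x) (iterate f n y) < eps).

(* Write O(z) for the orbit closure of z.  The proof rests on three facts:
   - a minimal set M absorbs every closed invariant set C that meets it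
     (M ∩ C is closed, invariant and nonempty), so two minimal sets that meet
     coincide;
   - by compactness, two closed sets containing arbitrarily close pairs of
     points intersect;
   - a syndetic set has bounded gaps, and a point w of O(y) is shadowed on any
     finite stretch of time by some iterate of y.
   If (x,y) is syndetically proximal, the pairs (f^n x, f^n y) give close points
   of O(x) and O(y), so O(y) meets, hence contains, the minimal set O(x).  For a
   minimal M ⊆ O(y) pick w ∈ M, shadow it by f^m y during a gap length L; some
   f^(m+i) x with i < L is then close to f^i w ∈ M, so M meets O(x) and M = O(x).
   When x is fixed, O(x) = {x}, and shadowing transfers the syndetic returns of
   y to x onto every point of O(y), which gives the two "in particular" claims. *)

From Stdlib Require Import Reals List Lra Lia Classical IndefiniteDescription.
Open Scope R_scope.

(* A syndetic set has bounded gaps: otherwise its complement would be thick. *)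
Lemma syndetic_bounded_gaps (S : nat -> Prop) : syndetic S ->
  exists L, forall n, exists i, (i < L)%nat /\ S (n + i)%nat.
Proof.
  intro HS. apply NNPP; intro Hno.
  assert (Hthick : thick (fun n => ~ S n)).
  { intro L. apply NNPP; intro Hrun. apply Hno. exists L. intro n.
    apply NNPP; intro Hgap. apply Hrun. exists n. intros i Hi Si.
    apply Hgap. exists i; auto. }
  destruct (HS _ Hthick) as [n [Sn nSn]]. contradiction.
Qed.

Lemma syndetic_inhabited (S : nat -> Prop) : syndetic S -> exists n, S n.
Proof.
  intro HS. destruct (HS (fun _ => True)) as [n [Sn _]].
  - intro L. exists 0%nat. auto.
  - exists n. exact Sn.
Qed.

Section MetricFacts.
Variables (X : Type) (d : X -> X -> R).
Hypothesis hd : is_metric d.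

Lemma d_refl z : d z z = 0.
Proof. destruct hd as [H _]. apply H. reflexivity. Qed.

Lemma d_sym a b : d a b = d b a.
Proof. destruct hd as [_ [H _]]. apply H. Qed.

Lemma d_tri a b c : d a c <= d a b + d b c.
Proof. destruct hd as [_ [_ H]]. apply H. Qed.

Lemma d_small_eq a b : (forall e, e > 0 -> d a b < e) -> a = b.
Proof.
  intro H. destruct hd as [Hzero _]. apply Hzero.
  assert (Hnonneg : 0 <= d a b).
  { pose proof (d_tri a b a) as T. rewrite d_refl, (d_sym b a) in T. lra. }
  destruct (Rle_lt_or_eq_dec _ _ Hnonneg) as [Hpos | Heq]; [|auto].
  specialize (H _ Hpos). lra.
Qed.

Lemma closure_in A z : A z -> closure d A z.
Proof. intros Hz e He. exists z. split; [exact Hz|]. rewrite d_refl. exact He. Qed.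

Lemma closure_closed A : is_closed d (closure d A).
Proof.
  intros z Hz e He. destruct (Hz (e / 2)) as [a [Ha Hza]]; [lra|].
  destruct (Ha (e / 2)) as [b [Hb Hab]]; [lra|].
  exists b. split; [exact Hb|]. pose proof (d_tri z a b). lra.
Qed.

Lemma closed_inter A B : is_closed d A -> is_closed d B ->
  is_closed d (fun z => A z /\ B z).
Proof.
  intros Ac Bc z Hz. split; [apply Ac | apply Bc]; intros e He;
    destruct (Hz e He) as [a [[Aa Ba] Hza]]; exists a; auto.
Qed.

Hypothesis hc : compact_space d.

(* Every sequence has a cluster point: otherwise the balls avoiding a tail of
   the sequence would form an open cover with no finite subcover. *)
Lemma cluster_point (a : nat -> X) : exists m, forall e, e > 0 -> forall N,
  exists k, (N <= k)%nat /\ d m (a k) < e.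
Proof.
  apply NNPP; intro Hnone.
  set (U := fun (i : X * R * nat) z =>
    let '(p, e, N) := i in
    e > 0 /\ (forall k, (N <= k)%nat -> e <= d p (a k)) /\ d p z < e).
  destruct (hc _ U) as [l Hl].
  - intros [[p e] N] z Hz. destruct Hz as [He [Htail Hpz]].
    exists (e - d p z). split; [lra|]. intros w Hw. repeat split; auto.
    pose proof (d_tri p z w). lra.
  - intro z. destruct (classic (exists e N, e > 0 /\
        forall k, (N <= k)%nat -> e <= d z (a k))) as [[e [N [He Htail]]] | Hno].
    + exists (z, e, N). repeat split; auto. rewrite d_refl. exact He.
    + exfalso. apply Hnone. exists z. intros e He N. apply NNPP; intro Hk.
      apply Hno. exists e, N. split; [exact He|]. intros k HNk.
      destruct (Rlt_or_le (d z (a k)) e) as [Hlt | Hle]; [|exact Hle].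
      exfalso. apply Hk. exists k. auto.
  - set (N := fold_right (fun i n => Nat.max (snd i) n) 0%nat l).
    assert (HN : forall i, In i l -> (snd i <= N)%nat).
    { unfold N. clear. induction l as [|j l IH]; simpl; [tauto|].
      intros i [-> | Hi]; [lia|]. specialize (IH i Hi). lia. }
    destruct (Hl (a N)) as [[[p e] M] [Hin [He [Htail Hp]]]].
    specialize (Htail N (HN _ Hin)). lra.
Qed.

Lemma closed_sets_approx_meet (A B : X -> Prop) :
  is_closed d A -> is_closed d B ->
  (forall eps, eps > 0 -> exists a b, A a /\ B b /\ d a b < eps) ->
  exists m, A m /\ B m.
Proof.
  intros Ac Bc Hclose.
  assert (Hpairs : forall k : nat, exists p : X * X,
            A (fst p) /\ B (snd p) /\ d (fst p) (snd p) < / INR (S k)).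
  { intro k. destruct (Hclose (/ INR (S k))) as [a [b Hab]].
    - apply Rinv_0_lt_compat, lt_0_INR. lia.
    - exists (a, b). exact Hab. }
  destruct (functional_choice _ Hpairs) as [p Hp].
  destruct (cluster_point (fun k => fst (p k))) as [m Hm].
  exists m. split.
  - apply Ac. intros e He. destruct (Hm e He 0%nat) as [k [_ Hk]].
    exists (fst (p k)). split; [apply Hp | exact Hk].
  - apply Bc. intros e He.
    destruct (archimed_cor1 (e / 2)) as [N [HN HN0]]; [lra|].
    destruct (Hm (e / 2) ltac:(lra) N) as [k [HNk Hk]].
    exists (snd (p k)). split; [apply Hp|].
    assert (Hinv : / INR (S k) <= / INR N).
    { apply Rinv_le_contravar; [apply lt_0_INR; lia | apply le_INR; lia]. }
    destruct (Hp k) as [_ [_ Hpk]].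
    pose proof (d_tri m (fst (p k)) (snd (p k))). lra.
Qed.

End MetricFacts.

Section Dynamics.
Variables (X : Type) (d : X -> X -> R) (f : X -> X).
Hypothesis hd : is_metric d.
Hypothesis hf : continuous_map d f.

Lemma iterate_add a b z : iterate f (a + b) z = iterate f a (iterate f b z).
Proof. unfold iterate. apply Nat.iter_add. Qed.

Lemma iterate_fixed x n : f x = x -> iterate f n x = x.
Proof.
  intro Hfx. induction n as [|n IH]; [reflexivity|].
  change (f (iterate f n x) = x). rewrite IH. exact Hfx.
Qed.

Lemma iterate_continuous n z eps : eps > 0 -> exists delta, delta > 0 /\
  forall w, d z w < delta -> d (iterate f n z) (iterate f n w) < eps.
Proof.
  revert eps. induction n as [|n IH]; intros eps He.
  - exists eps. auto.
  - destruct (hf (iterate f n z) eps He) as [d1 [Hd1 H1]].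
    destruct (IH d1 Hd1) as [d2 [Hd2 H2]].
    exists d2. split; [exact Hd2|]. intros w Hw. apply H1, H2, Hw.
Qed.

Lemma iterates_equicontinuous L z eps : eps > 0 -> exists delta, delta > 0 /\
  forall w, d z w < delta -> forall i, (i < L)%nat ->
    d (iterate f i z) (iterate f i w) < eps.
Proof.
  intro He. induction L as [|L IH].
  - exists 1. split; [lra|]. intros; lia.
  - destruct IH as [d1 [Hd1 H1]].
    destruct (iterate_continuous L z eps He) as [d2 [Hd2 H2]].
    exists (Rmin d1 d2). split; [apply Rmin_glb_lt; assumption|].
    intros w Hw i Hi.
    pose proof (Rmin_l d1 d2). pose proof (Rmin_r d1 d2).
    destruct (Nat.eq_dec i L) as [-> | Hne].
    + apply H2. lra.
    + apply H1; [lra | lia].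
Qed.

Lemma orbit_closure_shadow y w L eps : orbit_closure d f y w -> eps > 0 ->
  exists m, forall i, (i < L)%nat ->
    d (iterate f i w) (iterate f (i + m) y) < eps.
Proof.
  intros Hw He. destruct (iterates_equicontinuous L w eps He) as [delta [Hdelta Hclose]].
  destruct (Hw delta Hdelta) as [a [[m ->] Hwa]].
  exists m. intros i Hi. rewrite iterate_add. apply Hclose; assumption.
Qed.

Lemma orbit_closure_self z : orbit_closure d f z z.
Proof. apply closure_in; [exact hd|]. exists 0%nat. reflexivity. Qed.

Lemma orbit_closure_iterate z n : orbit_closure d f z (iterate f n z).
Proof. apply closure_in; [exact hd|]. exists n. reflexivity. Qed.

Lemma orbit_closure_closed z : is_closed d (orbit_closure d f z).
Proof. apply closure_closed. exact hd. Qed.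

Lemma orbit_closure_invariant z : invariant f (orbit_closure d f z).
Proof.
  intros w Hw e He. destruct (hf w e He) as [delta [Hdelta Hcont]].
  destruct (Hw delta Hdelta) as [a [[n ->] Hwa]].
  exists (iterate f (S n) z). split; [exists (S n); reflexivity|].
  apply Hcont. exact Hwa.
Qed.

Lemma invariant_iterate C n z : invariant f C -> C z -> C (iterate f n z).
Proof.
  intros HC Hz. induction n as [|n IH]; [exact Hz|].
  change (C (f (iterate f n z))). apply HC, IH.
Qed.

Lemma orbit_closure_least C z : is_closed d C -> invariant f C -> C z ->
  subset (orbit_closure d f z) C.
Proof.
  intros Cc Ci Cz w Hw. apply Cc. intros e He.
  destruct (Hw e He) as [a [[n ->] Hwa]].
  exists (iterate f n z). split; [apply invariant_iterate; assumption | exact Hwa].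
Qed.

Lemma orbit_closure_fixed x z : f x = x -> orbit_closure d f x z -> z = x.
Proof.
  intros Hfx Hz. apply (d_small_eq X d hd). intros e He.
  destruct (Hz e He) as [a [[n ->] Hza]]. rewrite iterate_fixed in Hza; assumption.
Qed.

Lemma orbit_closure_minimal z : minimal_point d f z ->
  minimal_set d f (orbit_closure d f z).
Proof.
  intros [M [[_ [Mc [Mi Mmin]]] Mz]].
  assert (HOM : subset (orbit_closure d f z) M) by (apply orbit_closure_least; assumption).
  split; [exists z; apply orbit_closure_self|].
  split; [apply orbit_closure_closed|]. split; [apply orbit_closure_invariant|].
  intros N HN Nc Ni HNO w. split; [apply HNO|]. intro Hw.
  assert (HNM : set_eq N M) by (apply Mmin; auto; intros u Hu; apply HOM, HNO, Hu).
  apply (orbit_closure_least N z); auto. apply HNM, Mz.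
Qed.

Lemma minimal_set_absorbs M C : minimal_set d f M -> is_closed d C -> invariant f C ->
  (exists m, M m /\ C m) -> subset M C.
Proof.
  intros [_ [Mc [Mi Mmin]]] Cc Ci [m Hm] w Mw.
  assert (E : set_eq (fun z => M z /\ C z) M).
  { apply Mmin.
    - exists m. exact Hm.
    - apply closed_inter; assumption.
    - intros z [Mz Cz]. split; auto.
    - intros z [Mz _]. exact Mz. }
  apply E in Mw. tauto.
Qed.

Lemma minimal_sets_meet_eq M N : minimal_set d f M -> minimal_set d f N ->
  (exists m, M m /\ N m) -> set_eq M N.
Proof.
  intros HM HN [m [Mm Nm]] w. pose proof HM as [_ [Mc [Mi _]]].
  pose proof HN as [_ [Nc [Ni _]]]. split.
  - apply (minimal_set_absorbs M N HM); eauto.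
  - apply (minimal_set_absorbs N M HN); eauto.
Qed.

Hypothesis hc : compact_space d.

(* If y is syndetically proximal to x, the orbit closure of y meets, hence
   contains, the minimal set O(x). *)
Lemma sprox_orbit_closure_sub x y : minimal_set d f (orbit_closure d f x) ->
  SProx d f x y -> subset (orbit_closure d f x) (orbit_closure d f y).
Proof.
  intros HOx Hy. apply minimal_set_absorbs;
    [exact HOx | apply orbit_closure_closed | apply orbit_closure_invariant|].
  apply (closed_sets_approx_meet X d hd hc); try apply orbit_closure_closed.
  intros eps He. destruct (syndetic_inhabited _ (Hy eps He)) as [n Hn].
  exists (iterate f n x), (iterate f n y).
  split; [apply orbit_closure_iterate|]. split; [apply orbit_closure_iterate|]. exact Hn.
Qed.

(* If y is syndetically proximal to x, every minimal set inside O(y) meets O(x):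
   shadow a point w of M by f^m y during a gap length of the return times. *)
Lemma sprox_minimal_meets x y M : SProx d f x y -> minimal_set d f M ->
  subset M (orbit_closure d f y) -> exists m, M m /\ orbit_closure d f x m.
Proof.
  intros Hy HM HMy. destruct HM as [[w Mw] [Mc [Mi _]]].
  apply (closed_sets_approx_meet X d hd hc); [exact Mc | apply orbit_closure_closed|].
  intros eps He.
  destruct (syndetic_bounded_gaps _ (Hy (eps / 2) ltac:(lra))) as [L HL].
  destruct (orbit_closure_shadow y w L (eps / 2) (HMy w Mw) ltac:(lra)) as [m Hm].
  destruct (HL m) as [i [Hi Hret]].
  exists (iterate f i w), (iterate f (i + m) x).
  split; [apply invariant_iterate; assumption|].
  split; [apply orbit_closure_iterate|].
  specialize (Hm i Hi). rewrite Nat.add_comm in Hret.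
  pose proof (d_tri X d hd (iterate f i w) (iterate f (i + m) y) (iterate f (i + m) x)).
  rewrite (d_sym X d hd (iterate f (i + m) y)) in *. lra.
Qed.

(* For a fixed point x, syndetic proximality to x passes from y to every point
   of O(y): a long run of a thick set is shadowed by the orbit of some f^m y,
   and a gap length of the returns of y fits into that run. *)
Lemma sprox_fixed_orbit_closure x y z : f x = x -> SProx d f x y ->
  orbit_closure d f y z -> SProx d f x z.
Proof.
  intros Hfx Hy Hz eps He T HT.
  destruct (syndetic_bounded_gaps _ (Hy (eps / 2) ltac:(lra))) as [L HL].
  destruct (HT L) as [a Ha].
  destruct (orbit_closure_shadow y z (a + L) (eps / 2) Hz ltac:(lra)) as [m Hm].
  destruct (HL (a + m)%nat) as [i [Hi Hret]].
  exists (a + i)%nat. split; [|apply Ha; exact Hi].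
  rewrite !iterate_fixed in * by exact Hfx.
  specialize (Hm (a + i)%nat ltac:(lia)).
  replace (a + m + i)%nat with (a + i + m)%nat in Hret by lia.
  pose proof (d_tri X d hd x (iterate f (a + i + m) y) (iterate f (a + i) z)).
  rewrite (d_sym X d hd (iterate f (a + i + m) y)) in *. lra.
Qed.

End Dynamics.

Theorem proposition7p4 (X : Type) (d : X -> X -> R) (f : X -> X)
  (hd : is_metric d) (hc : compact_space d) (hf : continuous_map d f)
  (x : X) (hx : minimal_point d f x) :
  (forall y, SProx d f x y ->
     minimal_set d f (orbit_closure d f x) /\
     subset (orbit_closure d f x) (orbit_closure d f y) /\
     (forall M, minimal_set d f M -> subset M (orbit_closure d f y) ->
        set_eq M (orbit_closure d f x))) /\
  (f x = x ->
     (forall y, SProx d f x y ->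
        forall z, minimal_point d f z -> orbit_closure d f y z -> z = x) /\
     set_eq (SProx d f x)
       (fun z => exists y, SProx d f x y /\ orbit_closure d f y z)).
Proof.
  pose proof (orbit_closure_minimal X d f hd hf x hx) as HOx.
  assert (Hunique : forall y, SProx d f x y -> forall M, minimal_set d f M ->
            subset M (orbit_closure d f y) -> set_eq M (orbit_closure d f x)).
  { intros y Hy M HM HMy. apply (minimal_sets_meet_eq X d f); auto.
    apply (sprox_minimal_meets X d f hd hf hc x y); assumption. }
  split.
  - intros y Hy. split; [exact HOx|]. split; [|exact (Hunique y Hy)].
    apply (sprox_orbit_closure_sub X d f hd hf hc); assumption.
  - intro Hfx. split.
    + intros y Hy z Hz Hzy.
      assert (HOz : subset (orbit_closure d f z) (orbit_closure d f y)).
      { apply orbit_closure_least;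
          [apply orbit_closure_closed | apply orbit_closure_invariant | ]; assumption. }
      pose proof (Hunique y Hy _ (orbit_closure_minimal X d f hd hf z Hz) HOz) as E.
      apply (orbit_closure_fixed X d f hd x z Hfx), E, orbit_closure_self; assumption.
    + intro z. split.
      * intro Hz. exists z. split; [exact Hz | apply orbit_closure_self; exact hd].
      * intros [y [Hy Hyz]]. apply (sprox_fixed_orbit_closure X d f hd hf x y); assumption.
Qed.
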